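(* Let $\mathfrak g$ be a finite-dimensional simple complex Lie algebra of classical type and $\mathfrak a\subseteq\mathfrak g$ a semisimple Levi subalgebra whose simple roots are simple roots of $\mathfrak g$. Let $W$ be a finite-dimensional $\mathfrak g\otimes\mathbb C[t]$-module and $w\in W$ a weight vector of weight $\lambda$ (for $\mathfrak h=\mathfrak h\otimes1$) such that $U(\mathfrak n^-\otimes\mathbb C[t]).w=W$. Then $$U(\mathfrak a\otimes\mathbb C[t]).w=\sum_{\mu\in Q^+_{\mathfrak a}}W_{\lambda-\mu},$$ where $W_\nu$ denotes the $\nu$-weight space of $W$.
   Context: $\mathfrak g$ is a finite-dimensional simple complex Lie algebra of classical type with triangular decomposition $\mathfrak g=\mathfrak n^+\oplus\mathfrak h\oplus\mathfrak n^-$, roots $R$, simple roots $\Pi$. A Levi subalgebra is, for $R'\subseteq R$ closed under addition (within $R$) and under $\alpha\mapsto-\alpha$, $\mathfrak a=\sum_{\alpha\in R'}[\mathfrak g_\alpha,\mathfrak g_{-\alpha}]\oplus\bigoplus_{\alpha\in R'}\mathfrak g_\alpha$, with induced triangular decomposition $\mathfrak n^\pm_{\mathfrak a}\subseteq\mathfrak n^\pm$, $\mathfrak h_{\mathfrak a}\subseteq\mathfrak h$, positive roots $R^+_{\mathfrak a}=R'\cap R^+$ and simple roots $\Pi_{\mathfrak a}$; here $\Pi_{\mathfrak a}\subseteq\Pi$ is assumed. $Q^+_{\mathfrak a}$ is the $\mathbb Z_{\ge0}$-span of $R^+_{\mathfrak a}$. The current algebra $\mathfrak g\otimes\mathbb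 C[t]$ has bracket $[x\otimes p,y\otimes q]=[x,y]\otimes pq$. *)

From HB Require Import structures.
From mathcomp Require Import all_boot all_order all_algebra.
From mathcomp Require Import complex.
From mathcomp Require Import reals.
Set Implicit Arguments.
Unset Strict Implicit.
Unset Printing Implicit Defensive.
Import Order.TTheory GRing.Theory Num.Theory.
Local Open Scope ring_scope.

Section Defs.
Variable R : realType.
Local Notation C := (R[i])%C.

Definition lbr (N : nat) (x y : 'M[C]_N) : 'M[C]_N := x *m y - y *m x.

Definition orth_form (N : nat) : 'M[C]_N :=
  \matrix_(i, j) (if (i + j == N.-1)%N then 1 else 0).
Definition sympl_form (N : nat) : 'M[C]_N :=
  \matrix_(i, j) (if (i + j == N.-1)%N then (if (i < N./2)%N then 1 else -1) else 0).

(** [g] is (the standard matrix model of) a simple complex Lie algebra of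
    classical type: sl_N (N >= 2), so_N (N = 3 or N >= 5), sp_N (N even >= 2),
    the orthogonal/symplectic forms having antidiagonal Gram matrices, so that
    diagonal / strictly upper / strictly lower triangular elements give the
    standard triangular decomposition. *)
Definition classical_alg (N : nat) (g : 'M[C]_N -> Prop) : Prop :=
  [\/ (2 <= N)%N /\ (forall x, g x <-> \tr x = 0),
      (N = 3 \/ 5 <= N)%N /\
        (forall x, g x <-> x^T *m orth_form N + orth_form N *m x = 0)
    | [/\ (2 <= N)%N, ~~ odd N &
        (forall x, g x <-> x^T *m sympl_form N + sympl_form N *m x = 0)]].

Definition cartan N (g : 'M[C]_N -> Prop) (x : 'M[C]_N) : Prop :=
  g x /\ forall i j : 'I_N, i != j -> x i j = 0.
Definition npos N (g : 'M[C]_N -> Prop) (x : 'M[C]_N) : Prop :=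
  g x /\ forall i j : 'I_N, (j <= i)%N -> x i j = 0.
Definition nneg N (g : 'M[C]_N -> Prop) (x : 'M[C]_N) : Prop :=
  g x /\ forall i j : 'I_N, (i <= j)%N -> x i j = 0.

(** Weights: functions on matrices, only their values on h matter. *)
Definition eqh N (g : 'M[C]_N -> Prop) (a b : 'M[C]_N -> C) : Prop :=
  forall h, cartan g h -> a h = b h.

Definition rootsp N (g : 'M[C]_N -> Prop) (a : 'M[C]_N -> C) (x : 'M[C]_N) : Prop :=
  g x /\ forall h, cartan g h -> lbr h x = a h *: x.
Definition is_root N (g : 'M[C]_N -> Prop) (a : 'M[C]_N -> C) : Prop :=
  (exists h, cartan g h /\ a h != 0) /\ (exists x, rootsp g a x /\ x != 0).
Definition pos_root N (g : 'M[C]_N -> Prop) (a : 'M[C]_N -> C) : Prop :=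
  is_root g a /\ exists x, [/\ rootsp g a x, x != 0 & npos g x].

Definition simple_in N (g : 'M[C]_N -> Prop) (P : ('M[C]_N -> C) -> Prop)
    (a : 'M[C]_N -> C) : Prop :=
  P a /\ ~ (exists b c, [/\ P b, P c & eqh g a (fun h => b h + c h)]).

Definition is_levi N (g : 'M[C]_N -> Prop) (R' : ('M[C]_N -> C) -> Prop) : Prop :=
  [/\ (forall a, R' a -> is_root g a),
      (forall a b, R' a -> R' b -> is_root g (fun h => a h + b h) ->
          R' (fun h => a h + b h)),
      (forall a, R' a -> R' (fun h => - a h)) &
      (forall a, simple_in g (fun b => R' b /\ pos_root g b) a ->
          simple_in g (pos_root g) a)].

Definition inspan (V : lmodType C) (P : V -> Prop) (v : V) : Prop :=
  exists (n : nat) (c : 'I_n -> C) (u : 'I_n -> V),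
    (forall i, P (u i)) /\ v = \sum_(i < n) c i *: u i.

Definition levi_alg N (g : 'M[C]_N -> Prop) (R' : ('M[C]_N -> C) -> Prop) :
    'M[C]_N -> Prop :=
  inspan (fun x =>
    (exists a y z, [/\ R' a, rootsp g a y, rootsp g (fun h => - a h) z &
                      x = lbr y z])
    \/ (exists a, R' a /\ rootsp g a x)).

Definition inQplus N (g : 'M[C]_N -> Prop) (R' : ('M[C]_N -> C) -> Prop)
    (mu : 'M[C]_N -> C) : Prop :=
  exists (n : nat) (al : 'I_n -> 'M[C]_N -> C),
    (forall i, R' (al i) /\ pos_root g (al i)) /\
    eqh g mu (fun h => \sum_(i < n) al i h).

(** A representation of g (x) C[t] on W = C^d: [rho x k] is the action of
    x (x) t^k; it is linear in x and respects brackets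
    [x (x) t^k, y (x) t^l] = [x,y] (x) t^(k+l). *)
Definition current_rep N d (g : 'M[C]_N -> Prop)
    (rho : 'M[C]_N -> nat -> 'M[C]_d) : Prop :=
  (forall (c : C) x y k, g x -> g y ->
      rho (c *: x + y) k = c *: rho x k + rho y k) /\
  (forall x y k l, g x -> g y ->
      lbr (rho x k) (rho y l) = rho (lbr x y) (k + l)%N).

(** U(L (x) C[t]).w : span of all w, (x1 t^k1)...(xm t^km).w with xi in L. *)
Definition Ugen N d (rho : 'M[C]_N -> nat -> 'M[C]_d) (L : 'M[C]_N -> Prop)
    (w : 'cV[C]_d) : 'cV[C]_d -> Prop :=
  inspan (fun u => exists s : seq ('M[C]_N * nat),
    (forall p, p \in s -> L p.1) /\
    u = foldr (fun p v => rho p.1 p.2 *m v) w s).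

(** v lies in the weight space W_nu (for h = h (x) 1). *)
Definition weight_vec N d (g : 'M[C]_N -> Prop) (rho : 'M[C]_N -> nat -> 'M[C]_d)
    (nu : 'M[C]_N -> C) (v : 'cV[C]_d) : Prop :=
  forall h, cartan g h -> rho h 0%N *m v = nu h *: v.

End Defs.

From HB Require Import structures.
From mathcomp Require Import all_boot all_order all_algebra.
From mathcomp Require Import complex.
From mathcomp Require Import reals zify ring.
From Stdlib Require Import Classical ClassicalEpsilon FunctionalExtensionality PropExtensionality.
Set Implicit Arguments. Unset Strict Implicit. Unset Printing Implicit Defensive.
Import Order.TTheory GRing.Theory Num.Theory.
Local Open Scope ring_scope.

(* Let [hS] be the sum of the fundamental coweights of the simple roots
   outside the Levi factor.  A positive root takes a nonnegative integer value
   at [hS], which is 0 exactly for the positive roots of the Levi factor.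
   Since [W] is spanned by monomials of negative root vectors applied to [w],
   [hS] acts diagonally on [W] with eigenvalues at most [lam hS], and its top
   eigenspace is spanned by the monomials that only use negative roots of the
   Levi factor.  Both [U(a (x) C[t]).w] and the sum of the weight spaces
   [W_(lam - mu)], [mu] in [Q^+_a], are this top eigenspace. *)

Section Span.
Variable R : realType.
Local Notation C := (R[i])%C.
Variable V : lmodType C.
Implicit Types (P Q : V -> Prop) (u v : V).

Lemma inspan_seqP P v : inspan P v <->
  exists s : seq (C * V), (forall p, p \in s -> P p.2) /\ v = \sum_(p <- s) p.1 *: p.2.
Proof.
split=> [[n [c [u [Pu ->]]]] | [s [Ps ->]]].
  exists [seq (c i, u i) | i <- enum 'I_n]; split.
    by move=> p /mapP [i _ ->]; exact: Pu.
  by rewrite big_map big_enum; apply: eq_bigl.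
exists (size s), (fun i => (nth (0, 0) s i).1), (fun i => (nth (0, 0) s i).2).
split; first by move=> i; apply: Ps; apply: mem_nth.
by rewrite (big_nth (0, 0)) big_mkord.
Qed.

Lemma inspan_gen P v : P v -> inspan P v.
Proof.
move=> Pv; apply/inspan_seqP; exists [:: (1, v)].
by split; [move=> p; rewrite inE => /eqP -> | rewrite big_seq1 scale1r].
Qed.

Lemma inspan0 P : inspan P 0.
Proof. by apply/inspan_seqP; exists [::]; rewrite big_nil. Qed.

Lemma inspanD P u v : inspan P u -> inspan P v -> inspan P (u + v).
Proof.
move=> /inspan_seqP [s [Ps ->]] /inspan_seqP [t [Pt ->]].
apply/inspan_seqP; exists (s ++ t); split; last by rewrite big_cat.
by move=> p; rewrite mem_cat => /orP [] ?; [apply: Ps | apply: Pt].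
Qed.

Lemma inspanZ P c v : inspan P v -> inspan P (c *: v).
Proof.
move=> /inspan_seqP [s [Ps ->]]; apply/inspan_seqP.
exists [seq (c * p.1, p.2) | p <- s]; split.
  by move=> p /mapP [q qs ->]; exact: (Ps q qs).
by rewrite big_map scaler_sumr; apply: eq_bigr => p _; rewrite scalerA.
Qed.

Lemma inspan_sum P (I : eqType) (r : seq I) (F : I -> V) :
  (forall i, i \in r -> inspan P (F i)) -> inspan P (\sum_(i <- r) F i).
Proof.
elim: r => [|i r IH] PF; first by rewrite big_nil; apply: inspan0.
rewrite big_cons; apply: inspanD; first by apply: PF; rewrite mem_head.
by apply: IH => j jr; apply: PF; rewrite inE jr orbT.
Qed.

Lemma inspan_trans P Q v :
  (forall u, P u -> inspan Q u) -> inspan P v -> inspan Q v.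
Proof.
move=> PQ /inspan_seqP [s [Ps ->]]; apply: inspan_sum => p ps.
by apply: inspanZ; apply: PQ; apply: Ps.
Qed.

Lemma inspan_scaled_sumP P v : (forall c u, P u -> P (c *: u)) ->
  inspan P v <-> exists n (u : 'I_n -> V), (forall j, P (u j)) /\ v = \sum_(j < n) u j.
Proof.
move=> PZ; split=> [[n [c [u [Pu ->]]]] | [n [u [Pu ->]]]].
  by exists n, (fun j => c j *: u j); split => // j; apply: PZ.
by exists n, (fun _ => 1), u; split => //; apply: eq_bigr => j _; rewrite scale1r.
Qed.

End Span.

Lemma inspan_additive (R : realType) (V W : lmodType (R[i])%C) (f : V -> W)
    (P : V -> Prop) (Q : W -> Prop) v :
  (forall a b, f (a + b) = f a + f b) -> (forall c a, f (c *: a) = c *: f a) ->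
  (forall u, P u -> inspan Q (f u)) -> inspan P v -> inspan Q (f v).
Proof.
move=> fD fZ PQ /inspan_seqP [s [Ps ->]].
have f0 : f 0 = 0 by rewrite -(scale0r 0) fZ scale0r.
elim: s Ps => [|p s IH] Ps; first by rewrite big_nil f0; apply: inspan0.
rewrite big_cons fD fZ; apply: inspanD; first by apply/inspanZ/PQ/Ps; rewrite mem_head.
by apply: IH => q qs; apply: Ps; rewrite inE qs orbT.
Qed.

Section Eigenvectors.
Variables (F : fieldType) (d : nat) (A : 'M[F]_d).

(* The product of the [A - e] over the eigenvalues [e] of the summands kills
   every summand but acts on a [c]-eigenvector as a nonzero scalar. *)
Lemma eigenpairs_sum_eq0 (s : seq (F * 'cV[F]_d)) c :
  (forall p, p \in s -> A *m p.2 = p.1 *: p.2 /\ p.1 != c) ->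
  A *m (\sum_(p <- s) p.2) = c *: \sum_(p <- s) p.2 ->
  \sum_(p <- s) p.2 = 0.
Proof.
move=> eig_s eig_sum.
pose Q (r : seq (F * 'cV[F]_d)) := foldr (fun p M => (A - p.1%:M) *m M) 1%:M r.
have Q_eig r e (u : 'cV[F]_d) :
    A *m u = e *: u -> Q r *m u = (\prod_(p <- r) (e - p.1)) *: u.
  move=> Au; elim: r => [|p r IH] /=; first by rewrite big_nil scale1r mul1mx.
  rewrite -mulmxA IH big_cons -scalemxAr mulmxBl Au mul_scalar_mx -scalerBl.
  by rewrite scalerA mulrC.
have : Q s *m (\sum_(p <- s) p.2) = 0.
  rewrite mulmx_sumr big1_seq // => p ps; rewrite (Q_eig _ _ _ (eig_s p ps).1).
  suff /eqP -> : \prod_(q <- s) (p.1 - q.1) == 0 by rewrite scale0r.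
  by rewrite prodf_seq_eq0; apply/hasP; exists p; rewrite //= subrr.
move/eqP; rewrite (Q_eig _ _ _ eig_sum) scaler_eq0 => /orP [|/eqP //].
rewrite prodf_seq_eq0 => /hasP [p ps]; rewrite subr_eq0 => /eqP cp.
by move: (eig_s p ps).2; rewrite cp eqxx.
Qed.

Lemma eigenvectors_sum_eq0 (us : seq 'cV[F]_d) c :
  (forall u, u \in us -> exists e, e != c /\ A *m u = e *: u) ->
  A *m (\sum_(u <- us) u) = c *: \sum_(u <- us) u ->
  \sum_(u <- us) u = 0.
Proof.
move=> eig_us.
have [s [<- eig_s]] : exists s : seq (F * 'cV[F]_d), map snd s = us /\
    forall p, p \in s -> A *m p.2 = p.1 *: p.2 /\ p.1 != c.
  elim: us eig_us => [|u us IH] eig_us; first by exists [::].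
  have [s [<- eig_s]] := IH (fun v vu => eig_us v (mem_behead (s := u :: us) vu)).
  have [e [ec Au]] := eig_us u (mem_head _ _).
  exists ((e, u) :: s); split => // p; rewrite inE => /orP [/eqP -> //|].
  exact: eig_s.
by rewrite !big_map; exact: eigenpairs_sum_eq0.
Qed.

End Eigenvectors.

Lemma mulmx_lbr (R : realType) n (A B : 'M[(R[i])%C]_n) (t : 'cV[(R[i])%C]_n) :
  A *m (B *m t) = B *m (A *m t) + lbr A B *m t.
Proof. by rewrite /lbr mulmxBl !mulmxA addrC subrK. Qed.

Lemma lbrZr (R : realType) n (h y : 'M[(R[i])%C]_n) c :
  lbr h (c *: y) = c *: lbr h y.
Proof. by rewrite /lbr -scalemxAr -scalemxAl scalerBr. Qed.

Definition asbool (P : Prop) : bool :=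
  if excluded_middle_informative P then true else false.

Lemma asboolP P : reflect P (asbool P).
Proof. by rewrite /asbool; case: excluded_middle_informative => H; constructor. Qed.

Section Representation.
Variable R : realType.
Local Notation C := (R[i])%C.
Variables (N d : nat) (g : 'M[C]_N -> Prop) (rho : 'M[C]_N -> nat -> 'M[C]_d).
Local Notation M := ('M[C]_N).
Hypothesis glin : forall (c : C) x y, g x -> g y -> g (c *: x + y).
Hypothesis g0 : g 0.
Hypothesis gbr : forall x y, g x -> g y -> g (lbr x y).
Hypothesis rep : current_rep g rho.

Lemma gZ c x : g x -> g (c *: x).
Proof. by move=> gx; have := glin c gx g0; rewrite addr0. Qed.

Lemma gD x y : g x -> g y -> g (x + y).
Proof. by move=> gx gy; have := glin 1 gx gy; rewrite scale1r. Qed.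

Lemma rep0 k : rho 0 k = 0.
Proof.
have := rep.1 1 0 0 k g0 g0; rewrite !scale1r addr0 => rho00.
by apply: (addrI (rho 0 k)); rewrite addr0 -rho00.
Qed.

Lemma repZ c x k : g x -> rho (c *: x) k = c *: rho x k.
Proof. by move=> gx; have := rep.1 c x 0 k gx g0; rewrite !addr0 rep0 addr0. Qed.

Lemma repD x y k : g x -> g y -> rho (x + y) k = rho x k + rho y k.
Proof. by move=> gx gy; have := rep.1 1 x y k gx gy; rewrite !scale1r. Qed.

Lemma rep_inspan (P : M -> Prop) (Q : 'cV[C]_d -> Prop) x k t :
  (forall y, P y -> g y) -> inspan P x ->
  (forall y, P y -> inspan Q (rho y k *m t)) -> inspan Q (rho x k *m t).
Proof.
move=> Pg /inspan_seqP [s [Ps ->]] PQ.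
have gs r : (forall p, p \in r -> P p.2) -> g (\sum_(p <- r) p.1 *: p.2).
  elim: r => [|p r IH] Pr; first by rewrite big_nil.
  rewrite big_cons; apply: gD; first by apply/gZ/Pg/Pr; rewrite mem_head.
  by apply: IH => q qr; apply: Pr; rewrite inE qr orbT.
elim: s Ps => [|p s IH] Ps; first by rewrite big_nil rep0 mul0mx; apply: inspan0.
have Ps' q : q \in s -> P q.2 by move=> qs; apply: Ps; rewrite inE qs orbT.
have Pp : P p.2 by apply: Ps; rewrite mem_head.
rewrite big_cons repD ?repZ ?mulmxDl -?scalemxAl; last first.
- exact: gs.
- exact: gZ (Pg _ Pp).
- exact: Pg.
by apply: inspanD; [apply/inspanZ/PQ | apply: IH].
Qed.

Lemma weight_vec_root (nu a : M -> C) x k t :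
  weight_vec g rho nu t -> rootsp g a x ->
  weight_vec g rho (fun h => nu h + a h) (rho x k *m t).
Proof.
move=> wt [gx ax] h ch.
rewrite mulmx_lbr (rep.2 _ _ _ _ ch.1 gx) add0n (ax h ch) repZ // (wt h ch).
by rewrite -scalemxAr -scalemxAl -scalerDl.
Qed.

Lemma weight_vec_eqh (nu nu' : M -> C) t : eqh g nu nu' ->
  weight_vec g rho nu t -> weight_vec g rho nu' t.
Proof. by move=> E wt h ch; rewrite wt // E. Qed.

Lemma weight_vecZ (nu : M -> C) c t :
  weight_vec g rho nu t -> weight_vec g rho nu (c *: t).
Proof. by move=> wt h ch; rewrite -scalemxAr wt // !scalerA mulrC. Qed.

Lemma rootsp_eqh a b x : eqh g a b -> rootsp g a x -> rootsp g b x.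
Proof. by move=> E [gx ax]; split => // h ch; rewrite ax // E. Qed.

Lemma is_root_eqh a b : eqh g a b -> is_root g a -> is_root g b.
Proof.
move=> E [[h [ch ah]] [x [ax x0]]]; split; first by exists h; rewrite -E.
by exists x; split => //; apply: rootsp_eqh ax.
Qed.

Lemma pos_root_eqh a b : eqh g a b -> pos_root g a -> pos_root g b.
Proof.
move=> E [ra [x [ax x0 nx]]]; split; first exact: is_root_eqh ra.
by exists x; split => //; apply: rootsp_eqh ax.
Qed.

End Representation.

Lemma inQplus0 (R : realType) N (g : 'M[(R[i])%C]_N -> Prop) R' :
  inQplus g R' (fun _ => 0).
Proof. by exists 0%N, (fun _ _ => 0); split => [[] //|h _]; rewrite big_ord0. Qed.

Lemma inQplus_eqh (R : realType) N (g : 'M[(R[i])%C]_N -> Prop) R' mu mu' :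
  eqh g mu mu' -> inQplus g R' mu -> inQplus g R' mu'.
Proof.
by move=> E [n [al [Ral Emu]]]; exists n, al; split => // h ch; rewrite -E // Emu.
Qed.

Lemma inQplusD (R : realType) N (g : 'M[(R[i])%C]_N -> Prop) R' mu a :
  inQplus g R' mu -> R' a -> pos_root g a -> inQplus g R' (fun h => mu h + a h).
Proof.
move=> [n [al [Ral Emu]]] Ra pa.
exists n.+1, (fun i => if unlift ord_max i is Some j then al j else a); split.
  by move=> i; case: unlift => [j|] //; exact: Ral.
move=> h ch; rewrite big_ord_recr /= unlift_none Emu //; congr (_ + _).
apply: eq_bigr => i _; have -> : widen_ord (leqnSn n) i = lift ord_max i.
  by apply: val_inj; rewrite /= /bump leqNgt ltn_ord.
by rewrite liftK.
Qed.

Section Grading.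
Variable R : realType.
Local Notation C := (R[i])%C.
Variables (N d : nat) (g : 'M[C]_N -> Prop) (rho : 'M[C]_N -> nat -> 'M[C]_d).
Local Notation M := ('M[C]_N).
Variables (R' : (M -> C) -> Prop) (w : 'cV[C]_d) (lam : M -> C).

Definition monomial (L : M -> Prop) (t : 'cV[C]_d) := exists s : seq (M * nat),
  (forall p, p \in s -> L p.1) /\ t = foldr (fun p v => rho p.1 p.2 *m v) w s.

Lemma monomial_cons (L : M -> Prop) t x k :
  monomial L t -> L x -> monomial L (rho x k *m t).
Proof.
move=> [s [Ls ->]] Lx; exists ((x, k) :: s); split => // p.
by rewrite inE => /orP [/eqP -> //|]; exact: Ls.
Qed.

Lemma Ugen_inspan (L : M -> Prop) (Q : 'cV[C]_d -> Prop) v : Q w ->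
  (forall x k t, L x -> Q t -> inspan Q (rho x k *m t)) ->
  Ugen rho L w v -> inspan Q v.
Proof.
move=> Qw QL; apply: inspan_trans => u [s [Ls ->]].
elim: s Ls => [|p s IH] Ls /=; first exact: inspan_gen.
have Ls' q : q \in s -> L q.1 by move=> qs; apply: Ls; rewrite inE qs orbT.
apply: (inspan_additive (mulmxDr _) (fun c a => esym (scalemxAr c _ a)) _ (IH Ls')).
by move=> t; apply: QL; apply: Ls; rewrite mem_head.
Qed.

Definition root_vec_in (x : M) := exists a, R' a /\ rootsp g a x.

Inductive neg_monomial : 'cV[C]_d -> (M -> C) -> Prop :=
| neg_monomial_w : neg_monomial w lam
| neg_monomial_cons b x k t nu : pos_root g b -> rootsp g (fun h => - b h) x ->
    neg_monomial t nu -> neg_monomial (rho x k *m t) (fun h => nu h - b h).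

Hypothesis gbr : forall x y, g x -> g y -> g (lbr x y).
Hypothesis rep : current_rep g rho.
Hypothesis levi : is_levi g R'.

Lemma levi_gen_inspan t x k :
  monomial root_vec_in t ->
  ((exists a y z, [/\ R' a, rootsp g a y, rootsp g (fun h => - a h) z & x = lbr y z])
   \/ root_vec_in x) ->
  inspan (monomial root_vec_in) (rho x k *m t).
Proof.
move=> mt [[a [y [z [Ra ay az ->]]]] | rx]; last exact/inspan_gen/monomial_cons.
have [_ _ Rneg _] := levi.
have ry : root_vec_in y by exists a.
have rz : root_vec_in z by exists (fun h => - a h); split => //; apply: Rneg.
rewrite -[k]addn0 -(rep.2 _ _ _ _ ay.1 az.1) /lbr mulmxBl -!mulmxA -scaleN1r.
by apply: inspanD; [|apply: inspanZ]; apply/inspan_gen/monomial_cons => //;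
  apply: monomial_cons.
Qed.

Hypotheses (glin : forall (c : C) x y, g x -> g y -> g (c *: x + y)) (g0 : g 0).

Lemma Ugen_levi_root_monomials v :
  Ugen rho (levi_alg g R') w v -> inspan (monomial root_vec_in) v.
Proof.
apply: Ugen_inspan => [|x k t Lx mt]; first by exists [::].
apply: (rep_inspan glin g0 rep _ Lx) =>
  [y [[a [y1 [y2 [_ [g1 _] [g2 _] ->]]]]|[a [_ []]]] //|].
  exact: gbr.
by move=> y; apply: levi_gen_inspan.
Qed.

Lemma root_monomial_levi t :
  monomial root_vec_in t -> monomial (levi_alg g R') t.
Proof.
move=> [s [Rs ->]]; exists s; split => // p /Rs rp.
by apply: inspan_gen; right.
Qed.

Hypothesis neg_span : forall x, nneg g x ->
  inspan (fun y => exists b, pos_root g b /\ rootsp g (fun h => - b h) y) x.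

Lemma Ugen_neg_monomials v :
  Ugen rho (nneg g) w v -> inspan (fun t => exists nu, neg_monomial t nu) v.
Proof.
apply: Ugen_inspan => [|x k t nx [nu mt]]; first by exists lam; apply: neg_monomial_w.
apply: (rep_inspan glin g0 rep _ (neg_span nx)) => [y [b [_ []]] //|y [b [pb ry]]].
by apply: inspan_gen; exists (fun h => nu h - b h); apply: neg_monomial_cons.
Qed.

Hypothesis wlam : weight_vec g rho lam w.

Lemma neg_monomial_weight t nu : neg_monomial t nu -> weight_vec g rho nu t.
Proof. by elim=> // b x k t' nu' _ bx _ IH; apply: weight_vec_root. Qed.

Variable hS : M.
Hypotheses (hS_cartan : cartan g hS) (levi_hS : forall a, R' a -> a hS = 0)
  (pos_root_hS_ge0 : forall b, pos_root g b -> 0 <= b hS)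
  (pos_root_hS_eq0 : forall b, pos_root g b -> b hS = 0 -> exists a, R' a /\ eqh g a b).

Lemma neg_monomial_hS_le t nu : neg_monomial t nu -> 0 <= lam hS - nu hS.
Proof.
elim=> [|b x k t' nu' pb _ _ IH]; first by rewrite subrr.
by rewrite opprB addrA addrAC; apply: addr_ge0 => //; apply: pos_root_hS_ge0.
Qed.

(* A negative monomial on which [hS] takes its top value [lam hS] only uses
   roots killed by [hS], i.e. roots of the Levi factor. *)
Lemma neg_monomial_levi t nu : neg_monomial t nu -> nu hS = lam hS ->
  monomial root_vec_in t /\ inQplus g R' (fun h => lam h - nu h).
Proof.
elim=> [_|b x k t' nu' pb bx mt IH top].
  by split; [exists [::] | apply: inQplus_eqh (inQplus0 _ _) => h _; rewrite subrr].
have : (lam hS - nu' hS) + b hS == 0 by rewrite -top addrAC subrK subrr.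
rewrite paddr_eq0 ?(neg_monomial_hS_le mt) ?pos_root_hS_ge0 //.
move=> /andP [/eqP top' /eqP b0].
have [|mt' Qnu'] := IH; first by apply/eqP; rewrite eq_sym -subr_eq0 top'.
have [a [Ra Eab]] := pos_root_hS_eq0 pb b0.
have [_ _ Rneg _] := levi.
split.
  apply: monomial_cons mt' _; exists (fun h => - a h); split; first exact: Rneg.
  by apply: rootsp_eqh bx => h ch; rewrite Eab.
apply: inQplus_eqh (inQplusD Qnu' Ra (pos_root_eqh (fun h ch => esym (Eab h ch)) pb)).
by move=> h ch; rewrite Eab // opprB addrA addrAC.
Qed.

Hypothesis W_gen : forall v, Ugen rho (nneg g) w v.

(* Split [t] along the negative monomials it is spanned by: the monomials of
   [hS]-weight different from [lam hS] sum to an eigenvector of [rho hS 0]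
   for [lam hS], hence to zero. *)
Lemma top_eigenspace_span t : rho hS 0 *m t = lam hS *: t ->
  inspan (fun u => exists nu, neg_monomial u nu /\ nu hS = lam hS) t.
Proof.
move=> eig_t; have /inspan_seqP [s [ms Et]] := Ugen_neg_monomials (W_gen t).
pose top (p : C * 'cV[C]_d) := asbool (exists nu, neg_monomial p.2 nu /\ nu hS = lam hS).
move: eig_t; rewrite Et [\sum_(p <- s) _](bigID top) /=.
set T := \sum_(p <- s | top p) _; set B := \sum_(p <- s | ~~ top p) _ => eig_TB.
have eig_T : rho hS 0 *m T = lam hS *: T.
  rewrite mulmx_sumr scaler_sumr; apply: eq_bigr => p /asboolP [nu [mp top_nu]].
  by rewrite -scalemxAr (neg_monomial_weight mp) // -top_nu !scalerA mulrC.
have -> : B = 0.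
  have -> : B = \sum_(u <- [seq p.1 *: p.2 | p <- s & ~~ top p]) u.
    by rewrite big_map big_filter.
  apply: (eigenvectors_sum_eq0 (A := rho hS 0) (c := lam hS)).
    move=> u /mapP [p]; rewrite mem_filter => /andP [/asboolP ntop ps] ->.
    have [nu mp] := ms p ps; exists (nu hS); split.
      by apply/negP => /eqP top_nu; apply: ntop; exists nu.
    by rewrite -scalemxAr (neg_monomial_weight mp) // !scalerA mulrC.
  rewrite big_map big_filter -/B.
  by move: eig_TB; rewrite mulmxDr eig_T scalerDr => /addrI.
rewrite addr0 /T -big_filter; apply: inspan_sum => p.
by rewrite mem_filter => /andP [/asboolP top_p _]; apply/inspanZ/inspan_gen.
Qed.

Lemma root_monomial_hS t : monomial root_vec_in t ->
  exists nu, weight_vec g rho nu t /\ nu hS = lam hS.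
Proof.
move=> [s [Rs ->]]; elim: s Rs => [|p s IH] Rs /=; first by exists lam.
have [nu [wt top]] := IH (fun q qs => Rs q (mem_behead (s := p :: s) qs)).
have [a [Ra ap]] := Rs p (mem_head _ _).
exists (fun h => nu h + a h); split; first exact: weight_vec_root.
by rewrite (levi_hS Ra) addr0.
Qed.

Lemma Ugen_levi_weight_spaces v : Ugen rho (levi_alg g R') w v ->
  inspan (fun u => exists mu, inQplus g R' mu /\
                   weight_vec g rho (fun h => lam h - mu h) u) v.
Proof.
move/Ugen_levi_root_monomials; apply: inspan_trans => t mt.
have [nu [wt top]] := root_monomial_hS mt.
have := top_eigenspace_span (t := t); rewrite (wt hS hS_cartan) top.
move=> /(_ erefl); apply: inspan_trans => u [nu' [mu_u top']].
apply: inspan_gen; exists (fun h => lam h - nu' h).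
split; first by have [] := neg_monomial_levi mu_u top'.
by apply: weight_vec_eqh (neg_monomial_weight mu_u) => h _; rewrite opprB addrC subrK.
Qed.

Lemma weight_spaces_Ugen_levi v :
  inspan (fun u => exists mu, inQplus g R' mu /\
                   weight_vec g rho (fun h => lam h - mu h) u) v ->
  Ugen rho (levi_alg g R') w v.
Proof.
apply: inspan_trans => u [mu [[n [al [Ral Emu]]] wu]].
have mu0 : mu hS = 0.
  by rewrite Emu // big1 // => i _; apply: levi_hS; have [] := Ral i.
have := top_eigenspace_span (t := u); rewrite (wu hS hS_cartan) mu0 subr0.
move=> /(_ erefl); apply: inspan_trans => t [nu [mt top]].
by apply/inspan_gen/root_monomial_levi; have [] := neg_monomial_levi mt top.
Qed.

End Grading.

Lemma two_neq0 (R : realType) : (2 : (R[i])%C) != 0.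
Proof. by rewrite pnatr_eq0. Qed.

Lemma mx_neq0_entry (F : pzRingType) m n (x : 'M[F]_(m, n)) :
  x != 0 -> exists i j, x i j != 0.
Proof.
move=> x0; apply: NNPP => no_entry; move/negP: x0; apply; apply/eqP/matrixP => i j.
rewrite mxE; apply/eqP; apply: NNPP => xij; apply: no_entry; exists i, j; exact/negP.
Qed.

Section RootSystem.
Variable R : realType.
Local Notation C := (R[i])%C.
Variable N : nat.
Local Notation M := ('M[C]_N).

Definition eroot (k l : 'I_N) : M -> C := fun h => h k k - h l l.

(* A root takes at [height_elt] twice its height: this separates positive
   from negative roots and drives the inductions on height. *)
Definition height_elt : M :=
  \matrix_(i, j) if i == j then (N.-1)%:R - 2 * (i : nat)%:R else 0.

Lemma eroot_height k l : eroot k l height_elt = 2 * ((l : nat)%:R - (k : nat)%:R).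
Proof. rewrite /eroot !mxE !eqxx; ring. Qed.

Lemma eroot_height_eq (k l i j : 'I_N) :
  eroot k l height_elt = eroot i j height_elt -> (l + i = j + k)%N.
Proof.
rewrite !eroot_height => /(mulfI (two_neq0 R)) E.
have : ((l + i)%N%:R : C) = (j + k)%N%:R.
  by rewrite !natrD -[(l : nat)%:R](subrK (k : nat)%:R) E addrAC subrK.
by move/eqP; rewrite eqr_nat => /eqP; lia.
Qed.

Lemma eroot_height_neq0 (k l : 'I_N) : (k : nat) <> l -> eroot k l height_elt != 0.
Proof.
move=> kl; rewrite eroot_height mulf_eq0 negb_or two_neq0 /= subr_eq0 eqr_nat.
by apply/negP => /eqP E; apply: kl; rewrite E.
Qed.

Lemma diag_tr (h : M) : (forall i j, i != j -> h i j = 0) -> h^T = h.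
Proof.
move=> hd; apply/matrixP => i j; rewrite mxE.
by case: (eqVneq i j) => [-> //|ij]; rewrite (hd i j ij) hd // eq_sym.
Qed.

Lemma lbr_diag_entry (h x : M) k l : (forall i j, i != j -> h i j = 0) ->
  lbr h x k l = (h k k - h l l) * x k l.
Proof.
move=> hd.
have hx : (h *m x) k l = h k k * x k l.
  rewrite mxE (bigD1 k) //= big1 ?addr0 // => j jk.
  by rewrite hd ?mul0r // eq_sym.
have xh : (x *m h) k l = x k l * h l l.
  by rewrite mxE (bigD1 l) //= big1 ?addr0 // => j jl; rewrite hd ?mulr0.
have -> : (h *m x - x *m h) k l = (h *m x) k l - (x *m h) k l by rewrite !mxE.
by rewrite hx xh mulrBl [x k l * _]mulrC.
Qed.

Lemma lbr_delta (h : M) (k l : 'I_N) : (forall i j, i != j -> h i j = 0) ->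
  lbr h (delta_mx k l) = eroot k l h *: delta_mx k l.
Proof.
move=> hd; apply/matrixP => i j; rewrite lbr_diag_entry // !mxE /eroot.
by case: (eqVneq i k) => [->|ik]; case: (eqVneq j l) => [->|jl] //=; rewrite ?mulr0.
Qed.

Variable g : M -> Prop.

Lemma rootsp_entry a x h k l : rootsp g a x -> cartan g h -> x k l != 0 ->
  a h = eroot k l h.
Proof.
move=> [_ ax] ch xkl; apply: (mulIf xkl).
rewrite /eroot -lbr_diag_entry; last by case: ch.
by rewrite ax // mxE.
Qed.

Lemma root_eroot a : is_root g a -> exists k l, eqh g a (eroot k l).
Proof.
move=> [_ [x [ax x0]]]; have [k [l xkl]] := mx_neq0_entry x0.
by exists k, l => h ch; apply: rootsp_entry ax ch xkl.
Qed.

Hypothesis height_cartan : cartan g height_elt.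

Lemma rootsp_upper a x (k l : 'I_N) : rootsp g a x -> x k l != 0 -> (k < l)%N ->
  forall i j : 'I_N, (j <= i)%N -> x i j = 0.
Proof.
move=> ax xkl kl i j ji; apply/eqP/negPn/negP => xij.
have := eroot_height_eq (etrans (esym (rootsp_entry ax height_cartan xkl))
                                (rootsp_entry ax height_cartan xij)).
lia.
Qed.

Lemma pos_root_of_entry a x (k l : 'I_N) :
  rootsp g a x -> x k l != 0 -> (k < l)%N -> pos_root g a.
Proof.
move=> ax xkl kl; have x0 : x != 0 by apply: contraNneq xkl => ->; rewrite mxE.
split; first split.
- exists height_elt; split => //.
  by rewrite (rootsp_entry ax height_cartan xkl); apply: eroot_height_neq0; lia.
- by exists x.
- by exists x; split => //; split; [exact: ax.1 | exact: rootsp_upper ax xkl kl].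
Qed.

Lemma pos_root_upper_entry b : pos_root g b ->
  exists (k l : 'I_N) x, [/\ (k < l)%N, rootsp g b x & x k l != 0].
Proof.
move=> [_ [x [bx x0 [_ nx]]]]; have [k [l xkl]] := mx_neq0_entry x0.
exists k, l, x; split => //; rewrite ltnNge; apply/negP => lk.
by move: xkl; rewrite nx // eqxx.
Qed.

Lemma pos_root_height b : pos_root g b -> exists m, (0 < m)%N /\ b height_elt = m%:R.
Proof.
move=> /pos_root_upper_entry [k [l [x [kl bx xkl]]]].
exists (l - k + (l - k))%N; split; first lia.
rewrite (rootsp_entry bx height_cartan xkl) eroot_height natrD natrB 1?ltnW //.
by rewrite mulr_natl mulr2n.
Qed.

Lemma pos_root_ind (P : (M -> C) -> Prop) :
  (forall b, pos_root g b ->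
     (forall c, pos_root g c -> forall m n, c height_elt = m%:R ->
        b height_elt = n%:R -> (m < n)%N -> P c) -> P b) ->
  forall b, pos_root g b -> P b.
Proof.
move=> IH b pb; have [n [_ En]] := pos_root_height pb.
elim/ltn_ind: n b pb En => n IHn b pb En.
apply: (IH b pb) => c pc m n' Em En' mn; apply: (IHn m) pc Em.
by move: En'; rewrite En => /eqP; rewrite eqr_nat => /eqP ->.
Qed.

Lemma pos_root_height_sum b c e :
  pos_root g b -> pos_root g c -> pos_root g e -> eqh g b (fun h => c h + e h) ->
  exists mb mc me, [/\ b height_elt = mb%:R, c height_elt = mc%:R,
                       e height_elt = me%:R, (mc < mb)%N & (me < mb)%N].
Proof.
move=> pb pc pe E.
have [mb [_ Eb]] := pos_root_height pb.
have [mc [mc0 Ec]] := pos_root_height pc.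
have [me [me0 Ee]] := pos_root_height pe.
have : (mb%:R : C) = (mc + me)%:R by rewrite natrD -Ec -Ee -Eb E.
by move/eqP; rewrite eqr_nat => /eqP Emb; exists mb, mc, me; split => //; lia.
Qed.

Hypothesis gT : forall x, g x -> g x^T.

Lemma rootsp_tr a x : rootsp g a x -> rootsp g (fun h => - a h) x^T.
Proof.
move=> [gx ax]; split => [|h ch]; first exact: gT.
have := congr1 trmx (ax h ch).
have trZ c (y : M) : (c *: y)^T = c *: y^T by apply/matrixP => i j; rewrite !mxE.
rewrite /lbr trZ linearB /= !trmx_mul (diag_tr ch.2) => E.
by rewrite -opprB E scaleNr.
Qed.

Lemma root_pos_or_neg a : is_root g a -> pos_root g a \/ pos_root g (fun h => - a h).
Proof.
move=> [[h [ch ah]] [x [ax x0]]].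
have [k [l xkl]] := mx_neq0_entry x0.
case: (ltngtP k l) => [kl|lk|kl].
- by left; apply: pos_root_of_entry ax xkl kl.
- right; apply: (pos_root_of_entry (rootsp_tr ax) _ lk).
  by rewrite mxE.
- by move: ah; rewrite (rootsp_entry ax ch xkl) /eroot (val_inj kl) subrr eqxx.
Qed.

Hypothesis nneg_decomp : forall x, nneg g x -> exists e : 'I_N -> 'I_N -> M,
  (forall k l, k != l -> rootsp g (eroot k l) (e k l)) /\
  x = \sum_k \sum_l x k l *: e k l.

Lemma nneg_inspan_neg_roots x : nneg g x ->
  inspan (fun y => exists b, pos_root g b /\ rootsp g (fun h => - b h) y) x.
Proof.
move=> nx; have [e [ee ->]] := nneg_decomp nx.
apply: inspan_sum => k _; apply: inspan_sum => l _.
have [->|xkl] := eqVneq (x k l) 0; first by rewrite scale0r; apply: inspan0.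
have lk : (l < k)%N.
  by rewrite ltnNge; apply/negP => kl; move: xkl; rewrite nx.2 // eqxx.
have kl : k != l by apply: contraTneq lk => ->; rewrite ltnn.
have [->|ekl] := eqVneq (e k l) 0; first by rewrite scaler0; apply: inspan0.
apply/inspanZ/inspan_gen.
have [pkl|pnkl] : pos_root g (eroot k l) \/ pos_root g (fun h => - eroot k l h).
- apply: root_pos_or_neg; split; last by exists (e k l); split => //; apply: ee.
  by exists height_elt; split => //; apply: eroot_height_neq0; lia.
- have [i [j [y [ij yb yij]]]] := pos_root_upper_entry pkl.
  by have := eroot_height_eq (rootsp_entry yb height_cartan yij); lia.
exists (fun h => - eroot k l h); split => //.
by apply: rootsp_eqh (ee k l kl) => h _; rewrite opprK.
Qed.

Hypothesis glin : forall (c : C) x y, g x -> g y -> g (c *: x + y).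
Hypothesis g0 : g 0.

Variable R' : (M -> C) -> Prop.
Hypothesis levi : is_levi g R'.

(* [om] is the family of fundamental coweights dual to the simple roots
   [eroot (pa i) (pb i)]. *)
Variables (r : nat) (pa pb : 'I_r -> 'I_N) (om : 'I_r -> M).
Hypotheses (om_cartan : forall j, cartan g (om j))
  (eroot_om : forall i j, eroot (pa i) (pb i) (om j) = (i == j)%:R)
  (pos_root_om_ge0 : forall b j, pos_root g b -> 0 <= b (om j))
  (pos_root_simple_or_sum : forall b, pos_root g b ->
      (exists i, eqh g b (eroot (pa i) (pb i))) \/
      (exists c e, [/\ pos_root g c, pos_root g e & eqh g b (fun h => c h + e h)])).

Definition outside_levi j := asbool (~ exists a, R' a /\ eqh g a (eroot (pa j) (pb j))).

(* The sum of the fundamental coweights of the simple roots outside the Levi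
   factor: it counts how many such simple roots a root contains. *)
Definition levi_grading : M := \sum_(j < r | outside_levi j) om j.

Lemma levi_grading_cartan : cartan g levi_grading.
Proof.
rewrite /levi_grading; elim/big_ind: _ => [| h1 h2 [g1 d1] [g2 d2] |] //.
- by split => // i j _; rewrite mxE.
- split; first by have := glin 1 g1 g2; rewrite scale1r.
  by move=> i j ij; rewrite mxE d1 // d2 // addr0.
Qed.

Lemma root_levi_grading b : is_root g b ->
  b levi_grading = \sum_(j < r | outside_levi j) b (om j).
Proof.
move=> /root_eroot [k [l E]]; rewrite (E _ levi_grading_cartan).
rewrite /eroot /levi_grading !summxE -sumrB.
by apply: eq_bigr => j _; rewrite (E _ (om_cartan j)).
Qed.

Lemma pos_root_levi_grading_ge0 b : pos_root g b -> 0 <= b levi_grading.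
Proof.
move=> b_pos; rewrite root_levi_grading; last by case: b_pos.
by apply: sumr_ge0 => j _; apply: pos_root_om_ge0.
Qed.

Lemma simple_root_levi_grading b i : pos_root g b -> eqh g b (eroot (pa i) (pb i)) ->
  b levi_grading = (outside_levi i)%:R.
Proof.
move=> b_pos E; rewrite root_levi_grading; last by case: b_pos.
under eq_bigr => j _ do rewrite E // eroot_om.
have [oi|noi] := boolP (outside_levi i).
  rewrite (bigD1 i) //= eqxx big1 ?addr0 // => j /andP [_ ji].
  by rewrite eq_sym (negbTE ji).
rewrite big1 // => j oj; have [ij|//] := eqVneq i j.
by move: noi; rewrite ij oj.
Qed.

(* By induction on the height: a positive root of the Levi factor is simple
   in it, hence a simple root of [g] lying in [R'], or a sum of two such. *)
Lemma pos_levi_root_grading a : R' a -> pos_root g a -> a levi_grading = 0.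
Proof.
move=> Ra a_pos; move: a a_pos Ra.
apply: (@pos_root_ind (fun a => R' a -> a levi_grading = 0)) => b b_pos IH Rb.
have [_ _ _ levi_simple] := levi.
have [bs|nbs] := classic (simple_in g (fun b => R' b /\ pos_root g b) b).
  have [_ not_sum] := levi_simple b bs.
  have [[i Ei]|[c [e [c_pos e_pos Ece]]]] := pos_root_simple_or_sum b_pos; last first.
    by exfalso; apply: not_sum; exists c, e.
  rewrite (simple_root_levi_grading b_pos Ei) /outside_levi.
  by case: asboolP => // outside; exfalso; apply: outside; exists b.
have [c [e [[Rc c_pos] [Re e_pos] Ece]]] : exists c e,
    [/\ R' c /\ pos_root g c, R' e /\ pos_root g e & eqh g b (fun h => c h + e h)].
  by apply: NNPP => no_sum; apply: nbs; split.
have [mb [mc [me [Eb Ec Ee ltc lte]]]] := pos_root_height_sum b_pos c_pos e_pos Ece.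
by rewrite (Ece _ levi_grading_cartan) (IH c c_pos mc mb) // (IH e e_pos me mb) // addr0.
Qed.

Lemma levi_root_grading a : R' a -> a levi_grading = 0.
Proof.
move=> Ra; have [Rroot _ Rneg _] := levi.
have [a_pos|pna] := root_pos_or_neg (Rroot _ Ra); first exact: pos_levi_root_grading.
by have /eqP := pos_levi_root_grading (Rneg _ Ra) pna; rewrite oppr_eq0 => /eqP.
Qed.

Lemma pos_root_grading_eq0 b : pos_root g b -> b levi_grading = 0 ->
  exists a, R' a /\ eqh g a b.
Proof.
move: b; apply: pos_root_ind => b b_pos IH b0.
have [Rroot Radd _ _] := levi.
have [[i Ei]|[c [e [c_pos e_pos Ece]]]] := pos_root_simple_or_sum b_pos.
  move: b0; rewrite (simple_root_levi_grading b_pos Ei) /outside_levi.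
  case: asboolP => [_ /eqP|inside _]; first by rewrite oner_eq0.
  have [a [Ra Ea]] := NNPP _ inside.
  by exists a; split => // h ch; rewrite Ea // Ei.
have [mb [mc [me [Eb Ec Ee ltc lte]]]] := pos_root_height_sum b_pos c_pos e_pos Ece.
have : c levi_grading + e levi_grading == 0 by rewrite -(Ece _ levi_grading_cartan) b0.
rewrite paddr_eq0 ?pos_root_levi_grading_ge0 // => /andP [/eqP c0 /eqP e0].
have [a1 [R1 E1]] := IH c c_pos mc mb Ec Eb ltc c0.
have [a2 [R2 E2]] := IH e e_pos me mb Ee Eb lte e0.
have E12 : eqh g (fun h => a1 h + a2 h) b by move=> h ch; rewrite Ece // E1 // E2.
exists (fun h => a1 h + a2 h); split => //; apply: Radd R1 R2 _.
by apply: (is_root_eqh (a := b)); [move=> h ch; rewrite E12 | case: b_pos].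
Qed.

End RootSystem.

Section LeviGeneration.
Variable R : realType.
Local Notation C := (R[i])%C.
Variable N : nat.
Local Notation M := ('M[C]_N).

Definition fundamental_coweights (g : M -> Prop) r (pa pb : 'I_r -> 'I_N)
    (om : 'I_r -> M) :=
  [/\ forall j, cartan g (om j),
      forall i j, eroot (pa i) (pb i) (om j) = (i == j)%:R,
      forall b j, pos_root g b -> 0 <= b (om j) &
      forall b, pos_root g b -> (exists i, eqh g b (eroot (pa i) (pb i))) \/
        exists c e, [/\ pos_root g c, pos_root g e & eqh g b (fun h => c h + e h)]].

Record matrix_root_data (g : M -> Prop) : Prop := MatrixRootData {
  data_lin : forall (c : C) x y, g x -> g y -> g (c *: x + y);
  data0 : g 0;
  data_lbr : forall x y, g x -> g y -> g (lbr x y);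
  data_tr : forall x, g x -> g x^T;
  data_height : cartan g (height_elt R N);
  data_nneg : forall x, nneg g x -> exists e : 'I_N -> 'I_N -> M,
    (forall k l, k != l -> rootsp g (eroot k l) (e k l)) /\
    x = \sum_k \sum_l x k l *: e k l;
  data_coweights : exists r pa pb om, @fundamental_coweights g r pa pb om
}.

Theorem Ugen_levi_weight_spaces_iff (g : M -> Prop) R' d
    (rho : M -> nat -> 'M[C]_d) (w : 'cV[C]_d) (lam : M -> C) :
  matrix_root_data g -> is_levi g R' -> current_rep g rho ->
  weight_vec g rho lam w -> (forall v, Ugen rho (nneg g) w v) ->
  forall v, Ugen rho (levi_alg g R') w v <->
    inspan (fun u => exists mu, inQplus g R' mu /\
                     weight_vec g rho (fun h => lam h - mu h) u) v.
Proof.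
move=> [glin g0 gbr gT hc nd [r [pa [pb [om [omc eom omge0 simple_or_sum]]]]]].
move=> levi rep wlam W_gen v.
have neg_span := nneg_inspan_neg_roots hc gT nd.
have hS_cartan := levi_grading_cartan glin g0 R' pa pb omc.
have levi_hS := levi_root_grading hc gT glin g0 levi omc eom simple_or_sum.
have ge0_hS := pos_root_levi_grading_ge0 glin g0 R' pa pb omc omge0.
have eq0_hS := pos_root_grading_eq0 hc glin g0 levi omc eom omge0 simple_or_sum.
split.
- exact (Ugen_levi_weight_spaces gbr rep levi glin g0 neg_span wlam hS_cartan
    levi_hS ge0_hS eq0_hS W_gen (v := v)).
- exact (weight_spaces_Ugen_levi rep levi glin g0 neg_span wlam hS_cartan
    levi_hS ge0_hS eq0_hS W_gen (v := v)).
Qed.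

End LeviGeneration.

Section FormAlgebra.
Variable R : realType.
Local Notation C := (R[i])%C.
Variable N : nat.
Local Notation M := ('M[C]_N).

Definition diagmx (f : 'I_N -> C) : M := \matrix_(i, j) if i == j then f i else 0.

(* [J] is the Gram matrix of a nondegenerate symmetric ([eps = 1]) or
   skew-symmetric ([eps = -1]) form, supported on the antidiagonal. *)
Variables (J : M) (eps : C).
Hypotheses (J_tr : J^T = eps *: J) (J_orth : J *m J^T = 1%:M) (eps2 : eps * eps = 1)
  (J_supp : forall i j : 'I_N, J i j != 0 -> (i + j)%N = N.-1).

Definition form_alg (x : M) := x^T *m J + J *m x = 0.

Lemma form_supp_rev (i j : 'I_N) : J i j != 0 -> j = rev_ord i.
Proof.
move=> /J_supp ij; apply: val_inj => /=; have := ltn_ord i; have := ltn_ord j; lia.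
Qed.

Lemma mulmx_form_entry (A : M) a b : (A *m J) a b = A a (rev_ord b) * J (rev_ord b) b.
Proof.
rewrite mxE (bigD1 (rev_ord b)) //= big1 ?addr0 // => c cb.
have [->|Jcb] := eqVneq (J c b) 0; first by rewrite mulr0.
by move: cb; rewrite (form_supp_rev Jcb) rev_ordK eqxx.
Qed.

Lemma form_mulmx_entry (A : M) a b : (J *m A) a b = J a (rev_ord a) * A (rev_ord a) b.
Proof.
rewrite mxE (bigD1 (rev_ord a)) //= big1 ?addr0 // => c ca.
have [->|Jac] := eqVneq (J a c) 0; first by rewrite mul0r.
by move: ca; rewrite (form_supp_rev Jac) eqxx.
Qed.

Lemma trform_mulmx_entry (A : M) a b :
  (J^T *m A) a b = J (rev_ord a) a * A (rev_ord a) b.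
Proof.
rewrite mxE (bigD1 (rev_ord a)) //= big1 ?addr0 ?mxE // => c ca.
rewrite mxE; have [->|Jca] := eqVneq (J c a) 0; first by rewrite mul0r.
by move: ca; rewrite (form_supp_rev Jca) rev_ordK eqxx.
Qed.

Lemma form_sym_entry i j : J j i = eps * J i j.
Proof. by have := congr1 (fun A : M => A i j) J_tr; rewrite !mxE. Qed.

Lemma form_sqr : J *m J = eps%:M.
Proof.
have E : J = eps *: J^T by rewrite J_tr scalerA eps2 scale1r.
by rewrite {2}E -scalemxAr J_orth scalemx1.
Qed.

Lemma form_orth_tr : J^T *m J = 1%:M.
Proof. exact: mulmx1C J_orth. Qed.

Lemma form_antidiag_sqr i : J i (rev_ord i) * J i (rev_ord i) = 1.
Proof.
have := congr1 (fun A : M => A i i) J_orth; rewrite form_mulmx_entry.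
by rewrite [_^T _ _]mxE [X in _ = X -> _]mxE eqxx.
Qed.

Lemma form_antidiag_neq0 i : J i (rev_ord i) != 0.
Proof.
apply/negP => /eqP J0; have := form_antidiag_sqr i.
by rewrite J0 mulr0 => /eqP; rewrite eq_sym oner_eq0.
Qed.

Lemma form_alg_lin c x y : form_alg x -> form_alg y -> form_alg (c *: x + y).
Proof.
move=> gx gy; rewrite /form_alg linearP /= mulmxDl mulmxDr -scalemxAl -scalemxAr.
by rewrite addrACA -scalerDr gx gy scaler0 addr0.
Qed.

Lemma form_alg0 : form_alg 0.
Proof. by rewrite /form_alg trmx0 mul0mx mulmx0 addr0. Qed.

Lemma form_alg_anti x : form_alg x -> x^T *m J = - (J *m x).
Proof. by move/eqP; rewrite addr_eq0 => /eqP. Qed.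

Lemma form_alg_lbr x y : form_alg x -> form_alg y -> form_alg (lbr x y).
Proof.
move=> /form_alg_anti Ax /form_alg_anti Ay.
rewrite /form_alg /lbr linearB /= !trmx_mul mulmxBl mulmxBr -!mulmxA Ax Ay.
by rewrite !mulmxN !mulmxA Ax Ay !mulNmx !opprK addrA subrK subrr.
Qed.

Lemma form_alg_tr x : form_alg x -> form_alg x^T.
Proof.
move=> gx; have Ax := form_alg_anti gx.
have Ex : x^T = - (J *m x *m J^T) by rewrite -mulNmx -Ax -mulmxA J_orth mulmx1.
rewrite /form_alg trmxK Ex mulmxN !mulmxA form_sqr mul_scalar_mx J_tr.
by rewrite -scalemxAl -scalemxAr scalerA eps2 scale1r subrr.
Qed.

Lemma cartan_rev h a : cartan form_alg h -> h (rev_ord a) (rev_ord a) = - h a a.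
Proof.
move=> [gh hd]; have := congr1 (fun A : M => A a (rev_ord a)) gh.
rewrite mxE [RHS]mxE mulmx_form_entry form_mulmx_entry rev_ordK (diag_tr hd) => /eqP.
rewrite [h a a * _]mulrC -mulrDr mulf_eq0 (negbTE (form_antidiag_neq0 a)) /=.
by rewrite addr_eq0 => /eqP ->; rewrite opprK.
Qed.

Lemma diagmx_cartan f : (forall a, f (rev_ord a) = - f a) -> cartan form_alg (diagmx f).
Proof.
move=> f_odd; have hd i j : i != j -> diagmx f i j = 0 by rewrite mxE => /negbTE ->.
split => //; rewrite /form_alg diag_tr //.
apply/matrixP => a b; rewrite mxE [RHS]mxE mulmx_form_entry form_mulmx_entry !mxE.
have [->|ba] := eqVneq b (rev_ord a).
  by rewrite rev_ordK !eqxx f_odd mulrC -mulrDr subrr mulr0.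
have ab : a != rev_ord b by apply: contraNneq ba => ->; rewrite rev_ordK.
by rewrite (negbTE ab) mul0r mulr0 addr0.
Qed.

Lemma height_cartan_form : cartan form_alg (height_elt R N).
Proof.
apply: (@diagmx_cartan (fun i : 'I_N => (N.-1)%:R - 2 * (i : nat)%:R)) => a /=.
rewrite (_ : (N - a.+1)%N = (N.-1 - a)%N) ?natrB; [ring | |]; have := ltn_ord a; lia.
Qed.

(* Twice the projection of [gl_N] onto the form algebra. *)
Definition form_proj (y : M) : M := y - J^T *m y^T *m J.

Lemma form_proj_alg y : form_alg (form_proj y).
Proof.
have E1 : (form_proj y)^T *m J = y^T *m J - eps *: (J^T *m y).
  rewrite /form_proj linearB /= !trmx_mul !trmxK mulmxBl -!mulmxA form_sqr.
  by rewrite mul_mx_scalar -scalemxAr.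
have E2 : J *m form_proj y = J *m y - y^T *m J.
  by rewrite /form_proj mulmxBr !mulmxA J_orth mul1mx.
rewrite /form_alg E1 E2 J_tr -scalemxAl scalerA eps2 scale1r.
by rewrite addrA subrK subrr.
Qed.

Lemma form_projD y z : form_proj (y + z) = form_proj y + form_proj z.
Proof. by rewrite /form_proj linearD /= mulmxDr mulmxDl opprD addrACA. Qed.

Lemma form_projZ c y : form_proj (c *: y) = c *: form_proj y.
Proof. by rewrite /form_proj linearZ /= -scalemxAr -scalemxAl scalerBr. Qed.

Lemma form_proj_sum (I : Type) (r : seq I) (F : I -> M) :
  form_proj (\sum_(i <- r) F i) = \sum_(i <- r) form_proj (F i).
Proof.
have proj0 : form_proj 0 = 0 by rewrite /form_proj trmx0 mulmx0 mul0mx subr0.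
exact: (big_morph _ form_projD proj0).
Qed.

Lemma form_proj_alg_id x : form_alg x -> form_proj x = x + x.
Proof.
move=> gx; rewrite /form_proj -mulmxA (form_alg_anti gx) mulmxN mulmxA.
by rewrite form_orth_tr mul1mx opprK.
Qed.

Lemma lbr_cartan_form_proj h y : cartan form_alg h ->
  lbr h (form_proj y) = form_proj (lbr h y).
Proof.
move=> [gh hd]; have hT := diag_tr hd.
have hJ : J *m h = - (h *m J) by rewrite -[J *m h]opprK -(form_alg_anti gh) hT.
have hJt : h *m J^T = - (J^T *m h).
  by apply: trmx_inj; rewrite trmx_mul trmxK hT hJ linearN /= trmx_mul trmxK hT.
have conj_lbr : lbr h (J^T *m y^T *m J) = J^T *m (lbr h y)^T *m J.
  rewrite /lbr linearB /= !trmx_mul hT mulmxBr mulmxBl.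
  rewrite !mulmxA hJt !mulNmx -!mulmxA hJ !mulmxN !mulmxA.
  by rewrite opprK addrC.
by rewrite /form_proj -conj_lbr /lbr mulmxBr mulmxBl !opprD !opprK addrACA.
Qed.

Lemma form_root_vec k l : rootsp form_alg (eroot k l) (2^-1 *: form_proj (delta_mx k l)).
Proof.
split.
  by have := form_alg_lin 2^-1 (form_proj_alg (delta_mx k l)) form_alg0; rewrite addr0.
move=> h ch; rewrite lbrZr lbr_cartan_form_proj // lbr_delta; last by case: ch.
by rewrite form_projZ scalerA mulrC -scalerA.
Qed.

Lemma form_alg_decomp x : form_alg x ->
  x = \sum_k \sum_l x k l *: (2^-1 *: form_proj (delta_mx k l)).
Proof.
move=> gx.
have Ex : x = 2^-1 *: form_proj x.
  have half2 : 2^-1 + 2^-1 = 1 :> C by field.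
  by rewrite form_proj_alg_id // scalerDr -scalerDl half2 scale1r.
rewrite {1}Ex {1}[x]matrix_sum_delta form_proj_sum scaler_sumr; apply: eq_bigr => k _.
rewrite form_proj_sum scaler_sumr; apply: eq_bigr => l _.
by rewrite form_projZ !scalerA; congr (_ *: _); exact: mulrC.
Qed.

Lemma form_conj_entry (A : M) a b :
  (J^T *m A *m J) a b = J (rev_ord a) a * A (rev_ord a) (rev_ord b) * J (rev_ord b) b.
Proof. by rewrite mulmx_form_entry trform_mulmx_entry. Qed.

Lemma form_proj_entry y a b :
  form_proj y a b = y a b - J (rev_ord a) a * y^T (rev_ord a) (rev_ord b) * J (rev_ord b) b.
Proof.
rewrite -form_conj_entry /form_proj.
by move: (J^T *m y^T *m J) => z; rewrite !mxE.
Qed.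

Lemma form_proj_delta_entry k l :
  form_proj (delta_mx k l) k l = 1 - (l == rev_ord k)%:R * eps.
Proof.
rewrite form_proj_entry !mxE !eqxx /=.
have [->|lk] := eqVneq l (rev_ord k).
  by rewrite rev_ordK !eqxx /= mulr1 form_sym_entry -mulrA form_antidiag_sqr mulr1 mul1r.
by rewrite andbF mulr0 !mul0r.
Qed.

Lemma form_alg_antidiag x k : form_alg x -> (1 + eps) * x k (rev_ord k) = 0.
Proof.
move=> gx; have := congr1 (fun A : M => A k (rev_ord k)) (form_proj_alg_id gx).
rewrite form_proj_entry [X in _ = X -> _]mxE [_^T _ _]mxE.
rewrite rev_ordK form_sym_entry.
have -> : eps * J k (rev_ord k) * x k (rev_ord k) * J k (rev_ord k) = eps * x k (rev_ord k).
  by rewrite -[RHS]mulr1 -(form_antidiag_sqr k); ring.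
by move/eqP; rewrite -subr_eq0 => /eqP E; rewrite -[RHS]oppr0 -E; ring.
Qed.

(* For a symmetric form the antidiagonal entries of [form_alg] vanish, so
   [eroot k l] with [k + l = N - 1] is not a root. *)
Definition valid_pair (k l : nat) := (eps != 1) || (k + l != N.-1)%N.

Lemma pos_root_form b : pos_root form_alg b ->
  exists k l : 'I_N, [/\ (k < l)%N, valid_pair k l & eqh form_alg b (eroot k l)].
Proof.
move=> pb; have [k [l [x [kl bx xkl]]]] := pos_root_upper_entry pb.
exists k, l; split => //; last by move=> h ch; apply: rootsp_entry bx ch xkl.
rewrite /valid_pair; have [e1|] //= := eqVneq eps 1.
apply/negP => /eqP kl1.
have lk : l = rev_ord k by apply: val_inj => /=; have := ltn_ord l; lia.
have := form_alg_antidiag k bx.1; rewrite -lk e1 => /eqP.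
by rewrite mulf_eq0 (negbTE xkl) orbF -mulr2n pnatr_eq0.
Qed.

Lemma pos_root_valid_pair (a b : 'I_N) :
  (a < b)%N -> valid_pair a b -> pos_root form_alg (eroot a b).
Proof.
move=> ab vab.
apply: (pos_root_of_entry height_cartan_form (form_root_vec a b) _ ab).
rewrite [_ a b]mxE form_proj_delta_entry mulf_eq0 invr_eq0 negb_or two_neq0 /=.
have [ba|ba] := eqVneq b (rev_ord a); last by rewrite mul0r subr0 oner_eq0.
move: vab; rewrite /valid_pair ba /= mul1r subr_eq0 eq_sym => /orP [//|].
by have := ltn_ord a => aN /negP []; apply/eqP; lia.
Qed.

Lemma eroot_rev (k l : 'I_N) : eqh form_alg (eroot k l) (eroot (rev_ord l) (rev_ord k)).
Proof. by move=> h ch; rewrite /eroot !cartan_rev //; ring. Qed.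

Variables (r : nat) (pa pb : 'I_r -> 'I_N) (s : 'I_r -> nat -> int) (cc : 'I_r -> C).

Definition form_coweight j := diagmx (fun k : 'I_N => cc j * (s j k)%:~R).

(* [valid_pair_split]: every positive root [eroot k l] with [k + l <= N - 1]
   is simple, or splits through a middle index [m], possibly after mirroring
   by [eroot_rev]. *)
Hypotheses (s_odd : forall j (k : 'I_N), s j (rev_ord k) = - s j k)
  (s_dual : forall i j, cc j * (s j (pa i) - s j (pb i))%:~R = (i == j)%:R)
  (cc_ge0 : forall j, 0 <= cc j)
  (s_antitone : forall j (k l : 'I_N), (k < l)%N -> valid_pair k l -> (s j l <= s j k)%R)
  (valid_pair_split : forall k l : nat, (k < l < N)%N -> (k + l <= N.-1)%N ->
     valid_pair k l ->
     [\/ exists i, k = pa i /\ l = pb i,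
         exists m, [/\ (k < m < l)%N, valid_pair k m & valid_pair m l] |
         exists m, [/\ (N.-1 - l < m < N.-1 - k)%N, valid_pair (N.-1 - l) m &
                       valid_pair m (N.-1 - k)]]).

Lemma form_coweight_cartan j : cartan form_alg (form_coweight j).
Proof. by apply: diagmx_cartan => a /=; rewrite s_odd mulrNz mulrN. Qed.

Lemma eroot_form_coweight j (k l : 'I_N) :
  eroot k l (form_coweight j) = cc j * (s j k - s j l)%:~R.
Proof. by rewrite /eroot !mxE !eqxx intrB mulrBr. Qed.

Lemma pos_root_simple_or_sum_upper b (k l : 'I_N) :
  (k < l)%N -> valid_pair k l -> (k + l <= N.-1)%N -> eqh form_alg b (eroot k l) ->
  (exists i, eqh form_alg b (eroot (pa i) (pb i))) \/
  (exists c e, [/\ pos_root form_alg c, pos_root form_alg e &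
                   eqh form_alg b (fun h => c h + e h)]).
Proof.
move=> kl vkl kl1 E.
have lN := ltn_ord l; have kN := ltn_ord k.
have [[i [ki li]]|[m [/andP [km ml] v1 v2]]|[m [/andP [m1 m2] v1 v2]]] :=
  valid_pair_split (k := k) (l := l) (ltac:(by rewrite kl lN)) kl1 vkl.
- left; exists i; have -> : pa i = k by apply: val_inj.
  by have -> : pb i = l by apply: val_inj.
- have mN : (m < N)%N by lia.
  right; exists (eroot k (Ordinal mN)), (eroot (Ordinal mN) l).
  by split; [apply: pos_root_valid_pair.. | move=> h ch; rewrite E // /eroot; ring].
- have mN : (m < N)%N by lia.
  have rl : (rev_ord l : nat) = (N.-1 - l)%N by rewrite /=; lia.
  have rk : (rev_ord k : nat) = (N.-1 - k)%N by rewrite /=; lia.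
  right; exists (eroot (rev_ord l) (Ordinal mN)), (eroot (Ordinal mN) (rev_ord k)).
  split; [apply: pos_root_valid_pair; rewrite ?rl ?rk //=..|].
  by move=> h ch; rewrite E // eroot_rev // /eroot; ring.
Qed.

Lemma pos_root_simple_or_sum_form b : pos_root form_alg b ->
  (exists i, eqh form_alg b (eroot (pa i) (pb i))) \/
  (exists c e, [/\ pos_root form_alg c, pos_root form_alg e &
                   eqh form_alg b (fun h => c h + e h)]).
Proof.
move=> /pos_root_form [k [l [kl vkl E]]].
have lN := ltn_ord l; have kN := ltn_ord k.
have [kl1|kl1] := leqP (k + l) N.-1; first exact: pos_root_simple_or_sum_upper kl vkl kl1 E.
apply: (@pos_root_simple_or_sum_upper _ (rev_ord l) (rev_ord k)).
- by rewrite /=; lia.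
- move: vkl; rewrite /valid_pair /= => /orP [->//|kl_ne]; apply/orP; right.
  by apply/eqP => kl_eq; move/eqP: kl_ne; apply; lia.
- by rewrite /=; lia.
- by move=> h ch; rewrite E // eroot_rev.
Qed.

Lemma form_root_data : matrix_root_data form_alg.
Proof.
split.
- exact: form_alg_lin.
- exact: form_alg0.
- exact: form_alg_lbr.
- exact: form_alg_tr.
- exact: height_cartan_form.
- move=> x [gx _]; exists (fun k l => 2^-1 *: form_proj (delta_mx k l)).
  by split; [move=> k l _; apply: form_root_vec | exact: form_alg_decomp].
exists r, pa, pb, form_coweight; split.
- exact: form_coweight_cartan.
- by move=> i j; rewrite eroot_form_coweight s_dual.
- move=> b j /pos_root_form [k [l [kl vkl E]]].
  rewrite (E _ (form_coweight_cartan j)) eroot_form_coweight.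
  by apply: mulr_ge0 => //; rewrite ler0z subr_ge0; apply: s_antitone.
- exact: pos_root_simple_or_sum_form.
Qed.

End FormAlgebra.

Ltac case_ifs_lia := repeat (case: ifP => ?; try (exfalso; lia)); try lia.

Section StandardForms.
Variable R : realType.
Local Notation C := (R[i])%C.
Variable N : nat.
Local Notation M := ('M[C]_N).

Lemma orth_form_tr : (orth_form R N : M)^T = 1 *: orth_form R N.
Proof. by apply/matrixP => i j; rewrite !mxE addnC mul1r. Qed.

Lemma orth_form_supp (i j : 'I_N) : (orth_form R N : M) i j != 0 -> (i + j)%N = N.-1.
Proof. by rewrite mxE; case: (eqVneq (i + j)%N N.-1) => // _; rewrite eqxx. Qed.

Lemma orth_form_orth : (orth_form R N : M) *m (orth_form R N)^T = 1%:M.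
Proof.
apply/matrixP => a b; rewrite (form_mulmx_entry orth_form_supp) !mxE.
have aN := ltn_ord a; have bN := ltn_ord b.
rewrite (_ : (a + rev_ord a == N.-1)%N = true) ?mul1r; last by apply/eqP => /=; lia.
have [->|ab] := eqVneq a b.
  by rewrite (_ : (b + rev_ord b == N.-1)%N = true) //; apply/eqP => /=; lia.
rewrite (_ : (b + rev_ord a == N.-1)%N = false) //; apply/negbTE/eqP => /= ba.
by move/eqP: ab; apply; apply: val_inj => /=; lia.
Qed.

Lemma sympl_form_supp (i j : 'I_N) : (sympl_form R N : M) i j != 0 -> (i + j)%N = N.-1.
Proof. by rewrite mxE; case: (eqVneq (i + j)%N N.-1) => // _; rewrite eqxx. Qed.

Hypothesis N_even : ~~ odd N.

Lemma half_even : N = (N./2 + N./2)%N.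
Proof. by rewrite -{1}(odd_double_half N) (negbTE N_even) add0n addnn. Qed.

Lemma sympl_form_tr : (sympl_form R N : M)^T = -1 *: sympl_form R N.
Proof.
apply/matrixP => i j; rewrite !mxE addnC.
case: eqP => ij; last by rewrite mulr0.
have hN := half_even; have iN := ltn_ord i; have jN := ltn_ord j.
by case: ifP => ?; case: ifP => ?; rewrite ?mulr1 ?mulN1r ?opprK //; exfalso; lia.
Qed.

Lemma sympl_form_orth : (sympl_form R N : M) *m (sympl_form R N)^T = 1%:M.
Proof.
apply/matrixP => a b; rewrite (form_mulmx_entry sympl_form_supp) !mxE.
have aN := ltn_ord a; have bN := ltn_ord b.
rewrite (_ : (a + rev_ord a == N.-1)%N = true); last by apply/eqP => /=; lia.
have [->|ab] := eqVneq a b.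
  rewrite (_ : (b + rev_ord b == N.-1)%N = true) /=; last by apply/eqP => /=; lia.
  by case: ifP => _; rewrite ?eqxx /= ?mulr1 ?mulrNN ?mulr1.
rewrite (_ : (b + rev_ord a == N.-1)%N = false) ?mulr0 //; apply/negbTE/eqP => /= ba.
by move/eqP: ab; apply; apply: val_inj => /=; lia.
Qed.

End StandardForms.

(* Coordinates of the fundamental coweight [e_0 + ... + e_j] of [so_N] and
   [sp_N] in the basis [h_k = E_kk - E_(N-1-k)(N-1-k)]. *)
Definition fund_coord (N j k : nat) : int :=
  if (k <= j)%N then 1 else if (N.-1 - j <= k)%N then -1 else 0.

Lemma sp_root_data (R : realType) N : ~~ odd N ->
  matrix_root_data (form_alg (sympl_form R N)).
Proof.
move=> N_even; have hN := half_even N_even; set n := N./2 in hN.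
have paN (i : 'I_n) : (i < N)%N by have := ltn_ord i; lia.
have pbN (i : 'I_n) : (i.+1 < N)%N by have := ltn_ord i; lia.
apply: (@form_root_data R N (sympl_form R N) (-1) _ _ _ _ n
  (fun i => Ordinal (paN i)) (fun i => Ordinal (pbN i))
  (fun j k => fund_coord N j k) (fun j : 'I_n => if (j.+1 == n)%N then 2^-1 else 1)).
- exact: sympl_form_tr.
- exact: sympl_form_orth.
- by rewrite mulrNN mul1r.
- exact: sympl_form_supp.
- move=> j k /=; have := ltn_ord j; have := ltn_ord k => kN jn.
  by rewrite /fund_coord; case_ifs_lia.
- move=> i j /=.
  have -> : (fund_coord N j i - fund_coord N j i.+1 =
             if (i == j :> nat) then (if (j.+1 == n)%N then 2 else 1) else 0)%R.
    by have := ltn_ord j; have := ltn_ord i => iN jn; rewrite /fund_coord; case_ifs_lia.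
  have [/val_inj ->|ij] := eqVneq (i : nat) j.
    by rewrite eqxx; case: ifP => _ /=; rewrite ?mulr1 // mulVf // two_neq0.
  by rewrite mulr0 (_ : (i == j) = false) //; apply/negbTE; apply: contraNneq ij => ->.
- by move=> j; case: ifP => _; rewrite ?invr_ge0 ?ler0n ?ler01.
- move=> j k l kl _ /=; have := ltn_ord j; have := ltn_ord l => lN jn.
  by rewrite /fund_coord; case_ifs_lia.
- move=> k l /andP [kl lN] kl1 _.
  have valid a b : valid_pair N (-1 : R[i]) a b.
    by rewrite /valid_pair -subr_eq0 -opprD oppr_eq0 -mulr2n pnatr_eq0.
  have [lk|lk] := eqVneq l k.+1.
    have kn : (k < n)%N by lia.
    by constructor 1; exists (Ordinal kn).
  by constructor 2; exists k.+1; split => //; lia.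
Qed.

Lemma so_odd_root_data (R : realType) N : odd N ->
  matrix_root_data (form_alg (orth_form R N)).
Proof.
move=> N_odd.
have hN : N = (N./2 + N./2).+1 by rewrite -{1}(odd_double_half N) N_odd addnn.
set n := N./2 in hN.
have paN (i : 'I_n) : (i < N)%N by have := ltn_ord i; lia.
have pbN (i : 'I_n) : (i.+1 < N)%N by have := ltn_ord i; lia.
apply: (@form_root_data R N (orth_form R N) 1 _ _ _ _ n
  (fun i => Ordinal (paN i)) (fun i => Ordinal (pbN i))
  (fun j k => fund_coord N j k) (fun j : 'I_n => 1)).
- exact: orth_form_tr.
- exact: orth_form_orth.
- by rewrite mulr1.
- exact: orth_form_supp.
- move=> j k /=; have := ltn_ord j; have := ltn_ord k => kN jn.
  by rewrite /fund_coord; case_ifs_lia.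
- move=> i j /=.
  have -> : (fund_coord N j i - fund_coord N j i.+1 = if i == j :> nat then 1 else 0)%R.
    by have := ltn_ord j; have := ltn_ord i => iN jn; rewrite /fund_coord; case_ifs_lia.
  rewrite mul1r; have [/val_inj ->|ij] := eqVneq (i : nat) j; first by rewrite !eqxx.
  by rewrite (negbTE (contra_neq (@congr1 _ _ val i j) ij)).
- by move=> j; rewrite ler01.
- move=> j k l kl _ /=; have := ltn_ord j; have := ltn_ord l => lN jn.
  by rewrite /fund_coord; case_ifs_lia.
- move=> k l /andP [kl lN] kl1; rewrite /valid_pair eqxx /= => /eqP kl_ne.
  have [lk|lk] := eqVneq l k.+1.
    have kn : (k < n)%N by lia.
    by constructor 1; exists (Ordinal kn).
  have [e|e] := eqVneq (k.+1 + l)%N N.-1.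
    by constructor 3; exists k.+2; split; [lia | apply/eqP; lia ..].
  by constructor 2; exists k.+1; split; [lia | apply/eqP; lia ..].
Qed.

(* For [so_2n] the coweights of the last two simple roots are the spin
   coweights [1/2 (e_0 + ... + e_(n-2) -+ e_(n-1))]; [spin_coord] gives twice
   the first one, [fund_coord (n - 1)] twice the second. *)
Definition spin_coord (n k : nat) : int :=
  if (k <= n - 2)%N then 1 else if (k == n - 1)%N then -1
  else if (k == n)%N then 1 else -1.

Lemma so_even_root_data (R : realType) N : (5 <= N)%N -> ~~ odd N ->
  matrix_root_data (form_alg (orth_form R N)).
Proof.
move=> N5 N_even; have hN := half_even N_even; set n := N./2 in hN.
pose lo (i : nat) := if (i < n - 1)%N then i else (n - 2)%N.
pose hi (i : nat) := if (i < n - 1)%N then i.+1 else n.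
have paN (i : 'I_n) : (lo i < N)%N by have := ltn_ord i; rewrite /lo; case: ifP => _; lia.
have pbN (i : 'I_n) : (hi i < N)%N by have := ltn_ord i; rewrite /hi; case: ifP => _; lia.
pose s (j : 'I_n) k := if (j == (n - 2)%N :> nat) then spin_coord n k else fund_coord N j k.
apply: (@form_root_data R N (orth_form R N) 1 _ _ _ _ n
  (fun i => Ordinal (paN i)) (fun i => Ordinal (pbN i))
  s (fun j : 'I_n => if (j < n - 2)%N then 1 else 2^-1)).
- exact: orth_form_tr.
- exact: orth_form_orth.
- by rewrite mulr1.
- exact: orth_form_supp.
- move=> j k /=; have := ltn_ord j; have := ltn_ord k => kN jn.
  by rewrite /s /fund_coord /spin_coord; case_ifs_lia.
- move=> i j /=.
  have -> : (s j (lo i) - s j (hi i) =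
             if i == j :> nat then (if (j < n - 2)%N then 1 else 2) else 0)%R.
    have := ltn_ord j; have := ltn_ord i => iN jn.
    by rewrite /s /lo /hi /fund_coord /spin_coord; case Hi : (i < n - 1)%N; case_ifs_lia.
  have [/val_inj ->|ij] := eqVneq (i : nat) j.
    by rewrite !eqxx; case: ifP => _ /=; rewrite ?mulr1 // mulVf // two_neq0.
  by rewrite mulr0 (negbTE (contra_neq (@congr1 _ _ val i j) ij)).
- by move=> j; case: ifP => _; rewrite ?invr_ge0 ?ler0n ?ler01.
- move=> j k l kl; rewrite /valid_pair eqxx /= => /eqP kl_ne.
  have := ltn_ord j; have := ltn_ord l => lN jn.
  by rewrite /s /fund_coord /spin_coord; case_ifs_lia.
- move=> k l /andP [kl lN] kl1; rewrite /valid_pair eqxx /= => /eqP kl_ne.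
  have [lk|lk] := eqVneq l k.+1.
    have kn : (k < n)%N by lia.
    by constructor 1; exists (Ordinal kn); rewrite /lo /hi /=; case: ifP => ?; split; lia.
  have [e|e] := eqVneq (k.+1 + l)%N N.-1.
    have [k2|k2] := eqVneq k (n - 2)%N.
      have kn : (n - 1 < n)%N by lia.
      by constructor 1; exists (Ordinal kn); rewrite /lo /hi /= ltnn; split; lia.
    by constructor 3; exists k.+2; split; [lia | apply/eqP; lia ..].
  by constructor 2; exists k.+1; split; [lia | apply/eqP; lia ..].
Qed.

Section SpecialLinear.
Variable R : realType.
Local Notation C := (R[i])%C.
Variable N : nat.
Local Notation M := ('M[C]_N).

Definition sl_alg (x : M) := \tr x = 0.

Lemma tr_diagmx (f : 'I_N -> C) : \tr (diagmx f) = \sum_i f i.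
Proof. by apply: eq_bigr => i _; rewrite mxE eqxx. Qed.

Lemma sum_leq_indicator j : (j < N)%N -> \sum_(k < N) ((k <= j)%N%:R : C) = j.+1%:R.
Proof.
move=> jN; rewrite -(big_mkord xpredT (fun k => ((k <= j)%N%:R : C))).
rewrite (@big_cat_nat _ _ _ j.+1 0 N _ _ (leq0n _) jN) /=.
have -> : \sum_(j.+1 <= k < N) ((k <= j)%N%:R : C) = 0.
  by rewrite big_nat_cond big1 // => k /andP [/andP [jk _] _]; rewrite leqNgt jk.
have -> : \sum_(0 <= k < j.+1) ((k <= j)%N%:R : C) = \sum_(0 <= k < j.+1) 1.
  rewrite big_nat_cond [RHS]big_nat_cond; apply: eq_bigr => k /andP [/andP [_ kj] _].
  by rewrite -ltnS kj.
by rewrite sumr_const_nat subn0 addr0.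
Qed.

Lemma sl_root_vec (k l : 'I_N) : k != l -> rootsp sl_alg (eroot k l) (delta_mx k l).
Proof.
move=> kl; split => [|h [_ hd]]; last exact: lbr_delta.
rewrite /sl_alg /mxtrace big1 // => i _; rewrite mxE.
have [ik|] //= := eqVneq i k; have [il|] //= := eqVneq i l.
by move: kl; rewrite -ik il eqxx.
Qed.

Lemma height_cartan_sl : cartan sl_alg (height_elt R N).
Proof.
split; last by move=> i j ij; rewrite mxE (negbTE ij).
pose f (i : 'I_N) : C := (N.-1)%:R - 2 * (i : nat)%:R.
have trf : \tr (height_elt R N) = \sum_i f i by apply: eq_bigr => i _; rewrite mxE eqxx.
have f_odd : \sum_i f i = - \sum_i f i.
  rewrite [LHS](reindex_inj rev_ord_inj) -sumrN; apply: eq_bigr => i _.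
  rewrite /f /= (_ : (N - i.+1)%N = (N.-1 - i)%N) ?natrB; [ring | |];
    have := ltn_ord i; lia.
move/eqP: f_odd; rewrite -subr_eq0 opprK -mulr2n -mulr_natl mulf_eq0 pnatr_eq0 /=.
by rewrite /sl_alg trf => /eqP.
Qed.

Definition sl_coweight (j : 'I_N.-1) : M :=
  diagmx (fun k => (k <= j)%N%:R - j.+1%:R / N%:R).

Lemma sl_coweight_cartan j : cartan sl_alg (sl_coweight j).
Proof.
split => [|a b ab]; last by rewrite mxE (negbTE ab).
have N0 : (N%:R : C) != 0 by rewrite pnatr_eq0; have := ltn_ord j; lia.
rewrite /sl_alg tr_diagmx sumrB sum_leq_indicator; last by have := ltn_ord j; lia.
by rewrite sumr_const card_ord -[_ *+ N]mulr_natr mulfVK // subrr.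
Qed.

Lemma eroot_sl_coweight j (k l : 'I_N) :
  eroot k l (sl_coweight j) = (k <= j)%N%:R - (l <= j)%N%:R.
Proof. by rewrite /eroot !mxE !eqxx; ring. Qed.

Lemma sl_pos_root b : pos_root sl_alg b ->
  exists k l : 'I_N, (k < l)%N /\ eqh sl_alg b (eroot k l).
Proof.
move=> /(pos_root_upper_entry (g := sl_alg)) [k [l [x [kl bx xkl]]]].
by exists k, l; split => // h ch; apply: rootsp_entry bx ch xkl.
Qed.

Lemma sl_root_data : matrix_root_data sl_alg.
Proof.
have paN (i : 'I_N.-1) : (i < N)%N by have := ltn_ord i; lia.
have pbN (i : 'I_N.-1) : (i.+1 < N)%N by have := ltn_ord i; lia.
have pos_eroot (a c : 'I_N) : (a < c)%N -> pos_root sl_alg (eroot a c).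
  move=> ac; apply: (pos_root_of_entry height_cartan_sl (sl_root_vec _) _ ac).
    by apply: contraTneq ac => ->; rewrite ltnn.
  by rewrite mxE !eqxx oner_eq0.
split.
- by move=> c x y; rewrite /sl_alg mxtraceD mxtraceZ => -> ->; rewrite mulr0 addr0.
- exact: mxtrace0.
- by move=> x y _ _; rewrite /sl_alg /lbr raddfB /= mxtrace_mulC subrr.
- by move=> x; rewrite /sl_alg mxtrace_tr.
- exact: height_cartan_sl.
- move=> x _; exists (fun k l => delta_mx k l).
  by split; [move=> k l; apply: sl_root_vec | exact: matrix_sum_delta].
exists N.-1, (fun i => Ordinal (paN i)), (fun i => Ordinal (pbN i)), sl_coweight.
split.
- exact: sl_coweight_cartan.
- move=> i j; rewrite eroot_sl_coweight /=.
  have [ij|ji|/val_inj ->] := ltngtP i j; last by rewrite eqxx subr0.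
  + by rewrite subrr -val_eqE ltn_eqF.
  + by rewrite subrr eq_sym -val_eqE ltn_eqF.
- move=> b j /sl_pos_root [k [l [kl E]]].
  rewrite (E _ (sl_coweight_cartan j)) eroot_sl_coweight.
  have [lj|lj] := leqP l j; first by rewrite (leq_trans (ltnW kl) lj) subrr.
  by rewrite subr0 ler0n.
- move=> b /sl_pos_root [k [l [kl E]]].
  have lN := ltn_ord l.
  have [lk|lk] := eqVneq (l : nat) k.+1.
    left; have kN : (k < N.-1)%N by lia.
    exists (Ordinal kN); move=> h ch; rewrite E //.
    have -> : Ordinal (paN (Ordinal kN)) = k by apply: val_inj.
    by have -> : Ordinal (pbN (Ordinal kN)) = l by apply: val_inj => /=; rewrite lk.
  right; have mN : (k.+1 < N)%N by lia.
  exists (eroot k (Ordinal mN)), (eroot (Ordinal mN) l).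
  by split; [apply: pos_eroot => /=; lia.. | move=> h ch; rewrite E // /eroot; ring].
Qed.

End SpecialLinear.

Lemma classical_root_data (R : realType) N (g : 'M[(R[i])%C]_N -> Prop) :
  classical_alg g -> matrix_root_data g.
Proof.
have ext g' : (forall x, g x <-> g' x) -> g = g'.
  by move=> E; apply: functional_extensionality => x; apply: propositional_extensionality.
case=> [[_ /ext ->]|[N35 /ext ->]|[_ N_even /ext ->]].
- exact: sl_root_data.
- have [N_odd|N_even] := boolP (odd N); first exact: so_odd_root_data.
  by apply: so_even_root_data => //; case: N35 => // N3; rewrite N3 in N_even.
- exact: sp_root_data.
Qed.

Theorem mainTheorem6 (R : realType) (N : nat) (g : 'M[(R[i])%C]_N -> Prop)
    (R' : ('M[(R[i])%C]_N -> (R[i])%C) -> Prop)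
    (d : nat) (rho : 'M[(R[i])%C]_N -> nat -> 'M[(R[i])%C]_d)
    (w : 'cV[(R[i])%C]_d) (lam : 'M[(R[i])%C]_N -> (R[i])%C) :
  classical_alg g -> is_levi g R' -> current_rep g rho ->
  w != 0 -> weight_vec g rho lam w ->
  (forall v, Ugen rho (nneg g) w v) ->
  forall v : 'cV[(R[i])%C]_d,
    Ugen rho (levi_alg g R') w v <->
    exists (n : nat) (mu : 'I_n -> 'M[(R[i])%C]_N -> (R[i])%C)
           (u : 'I_n -> 'cV[(R[i])%C]_d),
      (forall j, inQplus g R' (mu j) /\
                 weight_vec g rho (fun h => lam h - mu j h) (u j)) /\
      v = \sum_(j < n) u j.
Proof.
move=> g_cl levi rep _ wlam W_gen v.
rewrite (Ugen_levi_weight_spaces_iff (classical_root_data g_cl) levi rep wlam W_gen).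
rewrite inspan_scaled_sumP => [|c u [mu [Qmu wu]]]; last first.
  by exists mu; split => //; apply: weight_vecZ.
split=> [[n [u [wu ->]]] | [n [mu [u [wu ->]]]]]; last first.
  by exists n, u; split => // j; exists (mu j).
exists n, (fun j => proj1_sig (constructive_indefinite_description _ (wu j))), u.
by split => // j; case: constructive_indefinite_description.
Qed.
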